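(* The price function $p$ is concave (resp. convex) on $Q$ if and only if $r$ is concave (resp. convex) on $\big(\overline p(q_h),\overline p(q_\ell)\big)$.
   Context: Let $0<q_\ell<q_h<\infty$, $Q=[q_\ell,q_h]$, and let $c$ be a real number with $0<c<q_\ell$. Let $F$ be a probability distribution on $[0,1]$ with support $[0,1]$ admitting a twice continuously differentiable density $f:(0,1)\to\mathbb{R}_{>0}$. Define $r(v)=(1-F(v))/f(v)$ and $\psi(v)=v-r(v)$ on $(0,1)$, and assume $\psi'(v)>0$ whenever $\psi(v)>0$. For $q\in Q$, $p(q)$ is the unique maximizer over $p\in\mathbb{R}$ of $(p-c)\big(1-F(p/q)\big)$, and $\overline p(q)=p(q)/q$. *)

From Stdlib Require Import Reals.
From Coquelicot Require Import Coquelicot.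
Open Scope R_scope.

Definition concave_on (D : R -> Prop) (g : R -> R) : Prop :=
  forall x y t, D x -> D y -> 0 <= t <= 1 ->
    t * g x + (1 - t) * g y <= g (t * x + (1 - t) * y).

Definition convex_on (D : R -> Prop) (g : R -> R) : Prop :=
  forall x y t, D x -> D y -> 0 <= t <= 1 ->
    g (t * x + (1 - t) * y) <= t * g x + (1 - t) * g y.

Definition cdf_with_density (F f : R -> R) : Prop :=
  (forall v, continuous F v) /\
  (forall v, v <= 0 -> F v = 0) /\
  (forall v, 1 <= v -> F v = 1) /\
  (forall v, 0 < v < 1 -> is_derive F v (f v)) /\
  (forall v, 0 < v < 1 -> 0 < f v) /\
  (forall v, 0 < v < 1 ->
     ex_derive f v /\ ex_derive (Derive f) v /\ continuous (Derive (Derive f)) v).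

Definition hazr (F f : R -> R) (v : R) : R := (1 - F v) / f v.
Definition virt (F f : R -> R) (v : R) : R := v - hazr F f v.

Definition profit (F : R -> R) (c q x : R) : R := (x - c) * (1 - F (x / q)).

Definition unique_argmax (g : R -> R) (y : R) : Prop :=
  (forall x, g x <= g y) /\ (forall z, (forall x, g x <= g z) -> z = y).

(* By the first-order condition the unit price [V q = p q / q] solves
   [psi (V q) = c / q], and [psi] is strictly increasing where positive, so
   [V = psi^-1 (c / _)] maps [Q] onto [[V qh, V ql]] and [p q = q * V q] is a
   perspective function.  For [q = t q1 + (1 - t) q2] and the dual weight
   [mu = t q1 / q], the chord [t p q1 + (1 - t) p q2] equals [q * w] with
   [w = mu V q1 + (1 - mu) V q2], while [mu psi (V q1) + (1 - mu) psi (V q2) = c / q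
   = psi (V q)].  Hence [p] lies above its chord iff [w <= V q] iff [psi] lies below
   its chord, and [t |-> mu] is onto [[0, 1]]: [p] is concave (convex) iff [psi] is
   convex (concave) on [[V qh, V ql]].  As [psi = id - r] is continuous there, this
   is concavity (convexity) of [r] on the open interval. *)

From Stdlib Require Import Reals Lra.
From Coquelicot Require Import Coquelicot.
Open Scope R_scope.

Lemma convex_comb_between a b x y t :
  a <= x <= b -> a <= y <= b -> 0 <= t <= 1 -> a <= t * x + (1 - t) * y <= b.
Proof.
  intros Hx Hy Ht.
  assert (0 <= t * (x - a)) by (apply Rmult_le_pos; lra).
  assert (0 <= (1 - t) * (y - a)) by (apply Rmult_le_pos; lra).
  assert (0 <= t * (b - x)) by (apply Rmult_le_pos; lra).
  assert (0 <= (1 - t) * (b - y)) by (apply Rmult_le_pos; lra).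
  lra.
Qed.

Lemma concave_on_opp D g : concave_on D g <-> convex_on D (fun x => - g x).
Proof.
  split; intros Hg x y t Hx Hy Ht; specialize (Hg x y t Hx Hy Ht); lra.
Qed.

Lemma convex_on_id_sub D g : convex_on D (fun x => x - g x) <-> concave_on D g.
Proof.
  split; intros Hg x y t Hx Hy Ht; specialize (Hg x y t Hx Hy Ht); lra.
Qed.

Lemma concave_on_id_sub D g : concave_on D (fun x => x - g x) <-> convex_on D g.
Proof.
  split; intros Hg x y t Hx Hy Ht; specialize (Hg x y t Hx Hy Ht); lra.
Qed.

Lemma convex_on_Icc_of_Ioo (g : R -> R) a b : a < b ->
  (forall x, a <= x <= b -> continuous g x) ->
  convex_on (fun x => a < x < b) g -> convex_on (fun x => a <= x <= b) g.
Proof.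
  intros Hab Hcont Hconv x y t Hx Hy Ht.
  set (e n := / INR (n + 2)).
  set (shrink n w := w + e n * ((a + b) / 2 - w)).
  assert (He : forall n, 0 < e n < 1).
  { intro n. unfold e. rewrite plus_INR. assert (0 <= INR n) by apply pos_INR.
    simpl. split; [apply Rinv_0_lt_compat; lra|].
    rewrite <- Rinv_1. apply Rinv_lt_contravar; lra. }
  assert (He0 : is_lim_seq e 0).
  { apply (is_lim_seq_incr_n (fun n => / INR n) 2 0).
    change (Finite 0) with (Rbar_inv p_infty).
    apply is_lim_seq_inv; [apply is_lim_seq_INR | discriminate]. }
  assert (Hin : forall n w, a <= w <= b -> a < shrink n w < b).
  { intros n w Hw. specialize (He n). unfold shrink. nra. }
  assert (Hlim : forall w, a <= w <= b -> is_lim_seq (fun n => g (shrink n w)) (g w)).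
  { intros w Hw. apply is_lim_seq_continuous; [apply continuity_pt_filterlim, Hcont; lra|].
    assert (Hs := is_lim_seq_plus' _ _ w _ (is_lim_seq_const w)
                    (is_lim_seq_mult' _ _ _ ((a + b) / 2 - w) He0 (is_lim_seq_const _))).
    rewrite Rmult_0_l, Rplus_0_r in Hs. exact Hs. }
  assert (Hz := convex_comb_between a b x y t Hx Hy Ht).
  assert (Hle : forall n, g (shrink n (t * x + (1 - t) * y))
                          <= t * g (shrink n x) + (1 - t) * g (shrink n y)).
  { intro n. replace (shrink n (t * x + (1 - t) * y))
      with (t * shrink n x + (1 - t) * shrink n y) by (unfold shrink; ring).
    apply Hconv; auto. }
  exact (is_lim_seq_le _ _ _ _ Hle (Hlim _ Hz)
    (is_lim_seq_plus' _ _ _ _ (is_lim_seq_scal_l _ t _ (Hlim x Hx))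
                              (is_lim_seq_scal_l _ (1 - t) _ (Hlim y Hy)))).
Qed.

Lemma convex_on_Icc_iff_Ioo (g : R -> R) a b : a < b ->
  (forall x, a <= x <= b -> continuous g x) ->
  convex_on (fun x => a <= x <= b) g <-> convex_on (fun x => a < x < b) g.
Proof.
  intros Hab Hcont. split; [|exact (convex_on_Icc_of_Ioo g a b Hab Hcont)].
  intros Hg x y t Hx Hy. apply Hg; lra.
Qed.

Lemma concave_on_Icc_iff_Ioo (g : R -> R) a b : a < b ->
  (forall x, a <= x <= b -> continuous g x) ->
  concave_on (fun x => a <= x <= b) g <-> concave_on (fun x => a < x < b) g.
Proof.
  intros Hab Hcont. rewrite !concave_on_opp. apply convex_on_Icc_iff_Ioo; auto.
  intros x Hx. exact (continuous_opp g x (Hcont x Hx)).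
Qed.

Definition persp_weight (q1 q2 t : R) : R := t * q1 / (t * q1 + (1 - t) * q2).

Section PerspWeight.
Variables (q1 q2 t : R).
Hypotheses (q1_pos : 0 < q1) (q2_pos : 0 < q2) (t_01 : 0 <= t <= 1).

Let comb_pos : 0 < t * q1 + (1 - t) * q2.
Proof. nra. Qed.

Lemma persp_weight_01 : 0 <= persp_weight q1 q2 t <= 1.
Proof.
  unfold persp_weight. assert (0 <= t * q1) by nra. assert (0 <= (1 - t) * q2) by nra.
  split; [apply Rdiv_le_0_compat; lra | apply Rle_div_l; lra].
Qed.

Lemma persp_weight_swap_cancel : persp_weight q1 q2 (persp_weight q2 q1 t) = t.
Proof.
  assert (0 < t * q2 + (1 - t) * q1) by nra.
  unfold persp_weight. field. split; [lra|].
  intro E. assert (q1 * q2 = 0) by (rewrite <- E; ring). nra.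
Qed.

Lemma persp_weight_comb u1 u2 :
  let mu := persp_weight q1 q2 t in
  t * (q1 * u1) + (1 - t) * (q2 * u2) = (t * q1 + (1 - t) * q2) * (mu * u1 + (1 - mu) * u2).
Proof. unfold persp_weight. field. lra. Qed.

Lemma persp_weight_harmonic c :
  let mu := persp_weight q1 q2 t in
  mu * (c / q1) + (1 - mu) * (c / q2) = c / (t * q1 + (1 - t) * q2).
Proof. unfold persp_weight. field. lra. Qed.

End PerspWeight.

Definition unit_price (p : R -> R) (q : R) : R := p q / q.

Section PriceDuality.
Variables (ql qh c : R) (psi p : R -> R).
Hypotheses (q_range : 0 < ql < qh) (c_pos : 0 < c).
Hypothesis psi_incr :
  forall u w, 0 < u -> u < w -> w < 1 -> 0 < psi u -> psi u < psi w.
Hypothesis price_foc : forall q, ql <= q <= qh ->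
  0 < unit_price p q < 1 /\ psi (unit_price p q) = c / q.

Let Q q := ql <= q <= qh.
Let V := unit_price p.
Let a := V qh.
Let b := V ql.

Lemma psi_le_iff u w : 0 < u < 1 -> 0 < w < 1 -> 0 < psi u ->
  u <= w <-> psi u <= psi w.
Proof.
  intros Hu Hw Hpu. split; intro Hle.
  - destruct (Req_dec u w) as [->|Hne]; [lra|].
    left. apply psi_incr; lra.
  - destruct (Rle_or_lt u w) as [|Hlt]; [assumption|].
    assert (psi w < psi u) by (apply psi_incr; lra). lra.
Qed.

Lemma c_div_le q q' : 0 < q -> q <= q' -> c / q' <= c / q.
Proof.
  intros Hq Hqq. apply Rmult_le_compat_l; [lra|]. apply Rinv_le_contravar; lra.
Qed.

Lemma unit_price_bounds q : Q q -> a <= V q <= b.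
Proof.
  intros Hq. unfold Q in Hq.
  destruct (price_foc q Hq) as [Hv Hpv].
  destruct (price_foc qh ltac:(lra)) as [Ha Hpa].
  destruct (price_foc ql ltac:(lra)) as [Hb Hpb].
  assert (0 < c / qh) by (apply Rdiv_lt_0_compat; lra).
  assert (c / qh <= c / q) by (apply c_div_le; lra).
  assert (c / q <= c / ql) by (apply c_div_le; lra).
  unfold a, b, V.
  split; [apply (psi_le_iff (unit_price p qh)) | apply (psi_le_iff _ (unit_price p ql))]; lra.
Qed.

Lemma psi_bounds u : a <= u <= b -> 0 < u < 1 /\ c / qh <= psi u <= c / ql.
Proof.
  intros Hu.
  destruct (price_foc qh ltac:(lra)) as [Ha Hpa].
  destruct (price_foc ql ltac:(lra)) as [Hb Hpb].
  assert (0 < c / qh) by (apply Rdiv_lt_0_compat; lra).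
  fold V a b in Ha, Hb, Hpa, Hpb.
  assert (Hu01 : 0 < u < 1) by lra.
  assert (psi a <= psi u) by (apply (psi_le_iff a u); lra).
  assert (psi u <= psi b) by (apply (psi_le_iff u b); lra).
  lra.
Qed.

Lemma unit_price_lt : a < b.
Proof.
  assert (Hab := unit_price_bounds ql ltac:(unfold Q; lra)).
  destruct (price_foc qh ltac:(lra)) as [_ Hpa].
  destruct (price_foc ql ltac:(lra)) as [_ Hpb].
  assert (c / ql <> c / qh).
  { intro E. apply (Rmult_eq_reg_l c) in E; [|lra].
    apply Rinv_eq_reg in E. lra. }
  fold V a b in Hpa, Hpb. destruct (Req_dec a b) as [E|]; [|lra].
  rewrite E in Hpa. lra.
Qed.

Lemma unit_price_onto u : a <= u <= b -> Q (c / psi u) /\ V (c / psi u) = u.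
Proof.
  intros Hu. destruct (psi_bounds u Hu) as [Hu01 Hpsi].
  assert (0 < c / qh) by (apply Rdiv_lt_0_compat; lra).
  assert (HQ : Q (c / psi u)).
  { unfold Q. replace ql with (c / (c / ql)) by (field; lra).
    replace qh with (c / (c / qh)) by (field; lra).
    split; apply c_div_le; lra. }
  split; [exact HQ|].
  destruct (price_foc _ HQ) as [Hv Hpv]. fold V in Hv, Hpv.
  replace (c / (c / psi u)) with (psi u) in Hpv by (field; lra).
  assert (0 < psi (V (c / psi u))) by lra.
  set (q := c / psi u) in *.
  apply Rle_antisym; [apply (psi_le_iff (V q) u) | apply (psi_le_iff u (V q))]; lra.
Qed.

Lemma price_unit_price q : Q q -> p q = q * V q.
Proof. unfold Q, V, unit_price. intros Hq. field. lra. Qed.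

Lemma price_chord_iff q1 q2 t : Q q1 -> Q q2 -> 0 <= t <= 1 ->
  let mu := persp_weight q1 q2 t in
  let w := mu * V q1 + (1 - mu) * V q2 in
  let chord := mu * psi (V q1) + (1 - mu) * psi (V q2) in
  (t * p q1 + (1 - t) * p q2 <= p (t * q1 + (1 - t) * q2) <-> psi w <= chord) /\
  (p (t * q1 + (1 - t) * q2) <= t * p q1 + (1 - t) * p q2 <-> chord <= psi w).
Proof.
  intros HQ1 HQ2 Ht mu w chord.
  assert (Hq1 := HQ1). assert (Hq2 := HQ2). unfold Q in Hq1, Hq2.
  set (q := t * q1 + (1 - t) * q2).
  assert (HQ : Q q) by (apply convex_comb_between; auto).
  assert (Hq : 0 < q) by (unfold Q in HQ; lra).
  assert (Hw : a <= w <= b).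
  { apply convex_comb_between; [apply unit_price_bounds; auto .. | apply persp_weight_01; lra]. }
  destruct (psi_bounds w Hw) as [Hw01 Hpw].
  assert (0 < c / qh) by (apply Rdiv_lt_0_compat; lra).
  destruct (price_foc q1 HQ1) as [_ Hp1]. destruct (price_foc q2 HQ2) as [_ Hp2].
  destruct (price_foc q HQ) as [Hv Hpv]. fold V in Hv, Hpv, Hp1, Hp2.
  assert (0 < c / q) by (apply Rdiv_lt_0_compat; lra).
  assert (Hchord : t * p q1 + (1 - t) * p q2 = q * w).
  { rewrite (price_unit_price q1 HQ1), (price_unit_price q2 HQ2). apply persp_weight_comb; lra. }
  assert (HS : chord = psi (V q)).
  { unfold chord, mu. rewrite Hp1, Hp2, Hpv. apply persp_weight_harmonic; lra. }
  rewrite Hchord, (price_unit_price q HQ), HS.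
  split.
  - rewrite <- (psi_le_iff w (V q)) by lra. split; intro; nra.
  - rewrite <- (psi_le_iff (V q) w) by lra. split; intro; nra.
Qed.

Lemma persp_chord_onto u1 u2 t : a <= u1 <= b -> a <= u2 <= b -> 0 <= t <= 1 ->
  exists q1 q2 s, Q q1 /\ Q q2 /\ 0 <= s <= 1 /\
    V q1 = u1 /\ V q2 = u2 /\ persp_weight q1 q2 s = t.
Proof.
  intros Hu1 Hu2 Ht.
  destruct (unit_price_onto u1 Hu1) as [HQ1 HV1].
  destruct (unit_price_onto u2 Hu2) as [HQ2 HV2].
  assert (Hq1 := HQ1). assert (Hq2 := HQ2). unfold Q in Hq1, Hq2.
  exists (c / psi u1), (c / psi u2), (persp_weight (c / psi u2) (c / psi u1) t).
  repeat split; auto; try apply persp_weight_01; try apply persp_weight_swap_cancel; lra.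
Qed.

Lemma price_concave_iff_psi_convex :
  concave_on Q p <-> convex_on (fun u => a <= u <= b) psi.
Proof.
  split.
  - intros Hp u1 u2 t Hu1 Hu2 Ht.
    destruct (persp_chord_onto u1 u2 t Hu1 Hu2 Ht)
      as (q1 & q2 & s & HQ1 & HQ2 & Hs & <- & <- & <-).
    apply (price_chord_iff q1 q2 s HQ1 HQ2 Hs), Hp; auto.
  - intros Hpsi q1 q2 t HQ1 HQ2 Ht.
    assert (Hq1 := HQ1). assert (Hq2 := HQ2). unfold Q in Hq1, Hq2.
    apply (price_chord_iff q1 q2 t HQ1 HQ2 Ht).
    apply Hpsi; [apply unit_price_bounds; auto .. | apply persp_weight_01; lra].
Qed.

Lemma price_convex_iff_psi_concave :
  convex_on Q p <-> concave_on (fun u => a <= u <= b) psi.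
Proof.
  split.
  - intros Hp u1 u2 t Hu1 Hu2 Ht.
    destruct (persp_chord_onto u1 u2 t Hu1 Hu2 Ht)
      as (q1 & q2 & s & HQ1 & HQ2 & Hs & <- & <- & <-).
    apply (price_chord_iff q1 q2 s HQ1 HQ2 Hs), Hp; auto.
  - intros Hpsi q1 q2 t HQ1 HQ2 Ht.
    assert (Hq1 := HQ1). assert (Hq2 := HQ2). unfold Q in Hq1, Hq2.
    apply (price_chord_iff q1 q2 t HQ1 HQ2 Ht).
    apply Hpsi; [apply unit_price_bounds; auto .. | apply persp_weight_01; lra].
Qed.

End PriceDuality.

Lemma is_derive_pos_increases (g : R -> R) x y l :
  is_derive g x l -> 0 < l -> x < y -> exists z, x < z < y /\ g x < g z.
Proof.
  intros Hd Hl Hxy. apply is_derive_Reals in Hd.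
  destruct (Hd l Hl) as [d Hdd]. assert (Hd0 := cond_pos d).
  set (h := Rmin (d / 2) ((y - x) / 2)).
  assert (Hh : 0 < h <= d / 2 /\ h <= (y - x) / 2).
  { unfold h. split; [split|]; [apply Rmin_glb_lt | apply Rmin_l | apply Rmin_r]; lra. }
  specialize (Hdd h ltac:(lra) ltac:(rewrite Rabs_pos_eq; lra)).
  apply Rabs_lt_between in Hdd.
  assert (Hq : 0 < (g (x + h) - g x) / h) by lra.
  exists (x + h). split; [lra|].
  apply (Rmult_lt_compat_r h) in Hq; [|lra].
  unfold Rdiv in Hq. rewrite Rmult_0_l, Rmult_assoc, Rinv_l in Hq; lra.
Qed.

Lemma increasing_from_positive (g : R -> R) u w :
  (forall x, u <= x <= w -> ex_derive g x) ->
  (forall x, u <= x <= w -> 0 < g x -> 0 < Derive g x) ->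
  u < w -> 0 < g u -> g u < g w.
Proof.
  intros Hder Hpos Huw Hgu.
  assert (Hincr : forall x y, u <= x -> x < y -> y <= w -> 0 < g x ->
             exists z, x < z < y /\ g x < g z).
  { intros x y Hx Hxy Hy Hgx. apply (is_derive_pos_increases g x y (Derive g x)); auto.
    - apply Derive_correct, Hder; lra.
    - apply Hpos; [lra | exact Hgx]. }
  destruct (continuity_ab_maj g u w ltac:(lra)) as [M [HM HMuw]].
  { intros x Hx. apply continuity_pt_filterlim.
    apply (@ex_derive_continuous R_AbsRing R_NormedModule), Hder, Hx. }
  assert (HgM : g u <= g M) by (apply HM; lra).
  destruct (Req_dec M w) as [->|HMw].
  - destruct (Hincr u w ltac:(lra) Huw ltac:(lra) Hgu) as [z [Hz Hgz]].
    assert (g z <= g w) by (apply HM; lra). lra.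
  - destruct (Hincr M w ltac:(lra) ltac:(lra) ltac:(lra) ltac:(lra)) as [z [Hz Hgz]].
    assert (g z <= g M) by (apply HM; lra). lra.
Qed.

Lemma is_derive_global_max (g : R -> R) x l :
  (forall y, g y <= g x) -> is_derive g x l -> l = 0.
Proof.
  intros Hmax Hd. apply is_derive_Reals in Hd.
  exact (deriv_maximum g (x - 1) (x + 1) x (exist _ l Hd) ltac:(lra) ltac:(lra)
           (fun y _ _ => Hmax y)).
Qed.

Section Virtual.
Variables (F f : R -> R).
Hypothesis HF : cdf_with_density F f.

Lemma virt_ex_derive v : 0 < v < 1 -> ex_derive (virt F f) v.
Proof.
  destruct HF as (_ & _ & _ & HFd & Hfpos & Hf2). intros Hv.
  assert (HFe : ex_derive F v) by (exists (f v); apply HFd, Hv).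
  destruct (Hf2 v Hv) as [Hfd _]. specialize (Hfpos v Hv).
  unfold virt, hazr. auto_derive. repeat split; auto. lra.
Qed.

Lemma virt_continuous v : 0 < v < 1 -> continuous (virt F f) v.
Proof.
  intros Hv. apply (@ex_derive_continuous R_AbsRing R_NormedModule), virt_ex_derive, Hv.
Qed.

Lemma virt_increasing :
  (forall v, 0 < v < 1 -> 0 < virt F f v -> 0 < Derive (virt F f) v) ->
  forall u w, 0 < u -> u < w -> w < 1 -> 0 < virt F f u -> virt F f u < virt F f w.
Proof.
  intros Hpsi u w Hu Huw Hw Hpu.
  apply increasing_from_positive; auto; intros x Hx.
  - apply virt_ex_derive; lra.
  - apply Hpsi; lra.
Qed.

Lemma is_derive_profit c q x : 0 < q -> 0 < x / q < 1 ->
  is_derive (profit F c q) x (1 - F (x / q) - (x - c) * f (x / q) / q).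
Proof.
  destruct HF as (_ & _ & _ & HFd & _ & _). intros Hq Hv.
  assert (HFv := HFd _ Hv).
  unfold profit. auto_derive; [exists (f (x / q)); exact HFv|].
  change (Derive (fun y => F y) (x * / q)) with (Derive F (x / q)).
  rewrite (is_derive_unique F _ _ HFv). unfold Rdiv. ring.
Qed.

Lemma profit_argmax_interior c q x : 0 < c < q ->
  unique_argmax (profit F c q) x -> 0 < x / q < 1.
Proof.
  destruct HF as (_ & HF0 & HF1 & _). intros Hcq [Hmax Huniq]. unfold profit in *.
  split.
  - destruct (Rlt_or_le 0 (x / q)) as [|Hle]; [assumption|exfalso].
    specialize (Hmax q). rewrite (HF0 _ Hle) in Hmax.
    replace (q / q) with 1 in Hmax by (field; lra). rewrite (HF1 1) in Hmax by lra.
    assert (x <= 0).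
    { apply (Rmult_le_reg_r (/ q)); [apply Rinv_0_lt_compat; lra|]. unfold Rdiv in Hle. lra. }
    lra.
  - destruct (Rlt_or_le (x / q) 1) as [|Hge]; [assumption|exfalso].
    (* Beyond the support the profit vanishes, so [x + q] would be a second maximizer. *)
    assert (Hshift : x + q = x).
    { apply Huniq. intro y. specialize (Hmax y).
      rewrite (HF1 _ Hge) in Hmax. rewrite (HF1 ((x + q) / q)).
      - lra.
      - replace ((x + q) / q) with (x / q + 1) by (field; lra). lra. }
    lra.
Qed.

Lemma profit_argmax_virt c q x : 0 < c < q ->
  unique_argmax (profit F c q) x -> virt F f (x / q) = c / q.
Proof.
  intros Hcq Hx. assert (Hv := profit_argmax_interior c q x Hcq Hx).
  assert (Hfv : 0 < f (x / q)) by (apply HF; exact Hv).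
  assert (Hfoc := is_derive_global_max _ _ _ (proj1 Hx) (is_derive_profit c q x ltac:(lra) Hv)).
  unfold virt, hazr.
  replace (1 - F (x / q)) with ((x - c) * f (x / q) / q) by lra.
  field. lra.
Qed.

End Virtual.

Theorem lemma10 (ql qh c : R) (F f p : R -> R)
  (Hq : 0 < ql < qh) (Hc : 0 < c < ql)
  (HF : cdf_with_density F f)
  (Hpsi : forall v, 0 < v < 1 -> 0 < virt F f v -> 0 < Derive (virt F f) v)
  (Hp : forall q, ql <= q <= qh -> unique_argmax (profit F c q) (p q)) :
  let Q := fun q => ql <= q <= qh in
  let I := fun v => p qh / qh < v < p ql / ql in
  (concave_on Q p <-> concave_on I (hazr F f)) /\
  (convex_on Q p <-> convex_on I (hazr F f)).
Proof.
  intros Q I.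
  assert (Hfoc : forall q, ql <= q <= qh ->
            0 < unit_price p q < 1 /\ virt F f (unit_price p q) = c / q).
  { intros q Hq'. split;
      [apply (profit_argmax_interior F f HF c) | apply (profit_argmax_virt F f HF c)];
      auto; lra. }
  assert (Hincr := virt_increasing F f HF Hpsi).
  assert (Hc0 : 0 < c) by lra.
  assert (Hab := unit_price_lt ql qh c _ p Hq Hc0 Hincr Hfoc).
  assert (Hcont : forall u, unit_price p qh <= u <= unit_price p ql ->
             continuous (virt F f) u).
  { intros u Hu. apply (virt_continuous F f HF).
    exact (proj1 (psi_bounds ql qh c _ p Hq Hc0 Hincr Hfoc u Hu)). }
  split.
  - eapply iff_trans; [exact (price_concave_iff_psi_convex ql qh c _ p Hq Hc0 Hincr Hfoc)|].
    eapply iff_trans; [exact (convex_on_Icc_iff_Ioo _ _ _ Hab Hcont)|].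
    exact (convex_on_id_sub I (hazr F f)).
  - eapply iff_trans; [exact (price_convex_iff_psi_concave ql qh c _ p Hq Hc0 Hincr Hfoc)|].
    eapply iff_trans; [exact (concave_on_Icc_iff_Ioo _ _ _ Hab Hcont)|].
    exact (concave_on_id_sub I (hazr F f)).
Qed.
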